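(* For every fixed $x\in\mathbb{R}$, $$\lim_{n\to+\infty}n(2\ln n)^{1/2}D_n(F_n(x)/2)=e^{c_0-x},$$ where $F_n(x)=\dfrac{8x+3\ln(2\ln n)}{2n(2\ln n)^{1/2}}+\dfrac{(32\ln n)^{1/2}}{n}$.
   Context: For $\alpha\in(0,\pi)$ let $D_n(\alpha)=\det_{1\le j,l\le n}\left(\frac{1}{2\pi}\int_\alpha^{2\pi-\alpha}e^{i(j-l)\theta}\,d\theta\right)$ (the probability that a Haar unitary $n\times n$ matrix has no eigenvalue on a given arc of length $2\alpha$). By a result of Deift–Its–Krasovsky–Zhou there are constants $c_0\in\mathbb{R}$ and $s_0>0$ such that for every $\varepsilon>0$, uniformly in $s_0/n<\alpha<\pi-\varepsilon$, $$\ln D_n(\alpha)=n^2\ln\cos\frac{\alpha}{2}-\frac14\ln\Big(n\sin\frac{\alpha}{2}\Big)+c_0+O\Big(\frac{1}{n\sin(\alpha/2)}\Big).$$ $c_0$ denotes this constant. *)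

From HB Require Import structures.
From mathcomp Require Import all_boot all_order all_algebra.
From mathcomp Require Import all_classical all_reals.
From mathcomp Require Import topology normedtype sequences exp trigo measure
  lebesgue_measure lebesgue_integral.
From mathcomp Require Import complex.
Set Implicit Arguments. Unset Strict Implicit. Unset Printing Implicit Defensive.
Import Order.TTheory GRing.Theory Num.Theory.
Import numFieldNormedType.Exports.
Local Open Scope ring_scope.
Local Open Scope classical_set_scope.
Local Open Scope complex_scope.

(* (1/2pi) * int_a^{2pi-a} e^{i k theta} d theta, the complex integral
   being taken componentwise (real part: cos, imaginary part: sin). *)
Definition arc_coef (R : realType) (k : int) (a : R) : R[i] :=
  ((2 * pi)^-1)%:C *
  ((\int[@lebesgue_measure R]_(t in `[a, 2 * pi - a]) cos (k%:~R * t)) +i*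
   (\int[@lebesgue_measure R]_(t in `[a, 2 * pi - a]) sin (k%:~R * t))).

(* D_n(a) = det_{1<=j,l<=n} ( (1/2pi) int_a^{2pi-a} e^{i(j-l)theta} dtheta );
   indices shifted to 0..n-1, which does not change j - l. *)
Definition Dn (R : realType) (n : nat) (a : R) : R[i] :=
  \det (\matrix_(j < n, l < n) arc_coef ((j : nat)%:Z - (l : nat)%:Z) a).

Definition Fn (R : realType) (n : nat) (x : R) : R :=
  (8 * x + 3 * ln (2 * ln n%:R)) / (2 * n%:R * Num.sqrt (2 * ln n%:R))
  + Num.sqrt (32 * ln n%:R) / n%:R.

From HB Require Import structures.
From mathcomp Require Import all_boot all_order all_algebra.
From mathcomp Require Import all_classical all_reals.
From mathcomp Require Import topology normedtype sequences exp trigo measure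
  lebesgue_measure lebesgue_integral.
From mathcomp Require Import complex.
From mathcomp Require Import derive realfun.
From mathcomp Require Import ring lra.
Import Order.TTheory GRing.Theory Num.Theory.
Import numFieldNormedType.Exports.

(* Write q = (2 ln n)^(1/4), s = q^2 = (2 ln n)^(1/2), t = x + (3/2) ln q and
   u = s + t/s.  Then F_n(x)/4 = u/n, and since n^2 (u/n)^2/2 = s^2/2 + t +
   t^2/(2 s^2) with s^2/2 = ln n and ln s = 2 ln q, the DIKZ expansion at
   a = F_n(x)/2 gives
     ln (n s D_n(a)) - (c0 - x) = (n^2 ln cos (u/n) + u^2/2) - t^2/(2 s^2)
                                  - (1/4) ln (n sin (u/n) / s) + r
   with |r| <= C / (n sin (u/n)): the main terms cancel exactly.  As
   n = exp (s^2/2) is enormous compared to s, Taylor bounds for cos, sin and ln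
   make each remaining term O((1 + |C|)/q), and continuity of exp concludes. *)

Set Implicit Arguments.
Unset Strict Implicit.
Unset Printing Implicit Defensive.

Section Elementary.
Local Open Scope ring_scope.
Variable R : realType.

Lemma derive_ge0_le (f df : R -> R) (a b : R) : a <= b ->
  (forall z : R, is_derive z 1 f (df z)) -> (forall z, a <= z <= b -> 0 <= df z) ->
  f a <= f b.
Proof.
move=> ab f'df df_ge0.
have f_derivable z : derivable f z 1 by have f'dfz := f'df z; exact: ex_derive.
apply: (@ger0_derive1_ndecr R f a b) => //; rewrite ?lexx //.
- move=> z; rewrite in_itv /= => /andP[az zb].
  by have f'dfz := f'df z; rewrite derive1E derive_val df_ge0 // !ltW.
- apply: continuous_subspaceT => z.
  exact/differentiable_continuous/derivable1_diffP.
Qed.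

Lemma sin_le_id (y : R) : 0 <= y -> sin y <= y.
Proof.
move=> y0; have := derive_ge0_le (f := fun z => z - sin z) (df := fun z => 1 - cos z) y0.
rewrite sin0 subr0 subr_ge0; apply=> // z _.
by rewrite subr_ge0 cos_le1.
Qed.

Lemma taylor2_le_cos (y : R) : 0 <= y -> 1 - y ^+ 2 / 2 <= cos y.
Proof.
move=> y0; suff : 0 <= cos y - 1 + y ^+ 2 / 2 by lra.
have := derive_ge0_le (f := fun z => cos z - 1 + z ^+ 2 / 2)
  (df := fun z => z - sin z) y0.
rewrite cos0 subrr expr0n /= mul0r addr0; apply.
  by move=> z; apply: is_derive_eq; rewrite scaler0 add0r /GRing.scale /=; field.
by move=> z /andP[z0 _]; rewrite subr_ge0 sin_le_id.
Qed.

Lemma taylor3_le_sin (y : R) : 0 <= y -> y - y ^+ 3 / 6 <= sin y.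
Proof.
move=> y0; suff : 0 <= sin y - y + y ^+ 3 / 6 by lra.
have := derive_ge0_le (f := fun z => sin z - z + z ^+ 3 / 6)
  (df := fun z => cos z - 1 + z ^+ 2 / 2) y0.
rewrite sin0 expr0n /= mul0r subr0 addr0; apply.
  by move=> z; apply: is_derive_eq; rewrite scaler0 add0r /GRing.scale /=; field.
by move=> z /andP[z0 _]; have := taylor2_le_cos z0; lra.
Qed.

Lemma cos_le_taylor4 (y : R) : 0 <= y -> cos y <= 1 - y ^+ 2 / 2 + y ^+ 4 / 24.
Proof.
move=> y0; suff : 0 <= 1 - y ^+ 2 / 2 + y ^+ 4 / 24 - cos y by lra.
have := derive_ge0_le (f := fun z => 1 - z ^+ 2 / 2 + z ^+ 4 / 24 - cos z)
  (df := fun z => sin z - z + z ^+ 3 / 6) y0.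
rewrite cos0 !expr0n /= !mul0r subr0 addr0 subrr; apply.
  by move=> z; apply: is_derive_eq; rewrite scaler0 add0r /GRing.scale /=; field.
by move=> z /andP[z0 _]; have := taylor3_le_sin z0; lra.
Qed.

Lemma ln_le_subr1 (y : R) : 0 < y -> ln y <= y - 1.
Proof.
by move=> y0; have := @le_ln1Dx R (y - 1); rewrite [1 + _]addrC subrK; apply; lra.
Qed.

Lemma ln_ge_1Binv (y : R) : 0 < y -> 1 - y^-1 <= ln y.
Proof.
move=> y0; have := @ln_le_subr1 y^-1; rewrite invr_gt0 lnV ?posrE // => /(_ y0).
lra.
Qed.

Lemma ln_near1 (rho d : R) : d <= 1 / 2 -> `|rho - 1| <= d -> `|ln rho| <= 2 * d.
Proof.
move=> d_le; rewrite ler_norml => /andP[rho_ge rho_le].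
have rho_gt0 : 0 < rho by lra.
have := ln_le_subr1 rho_gt0; have := ln_ge_1Binv rho_gt0.
have -> : 1 - rho^-1 = (rho - 1) / rho by field; lra.
move=> ln_ge ln_le; rewrite ler_norml; apply/andP; split; last by lra.
apply: le_trans ln_ge; rewrite ler_pdivlMr //; nra.
Qed.

Lemma ln_cos_taylor (th : R) : 0 <= th <= 1 ->
  `|ln (cos th) + th ^+ 2 / 2| <= th ^+ 4.
Proof.
move=> /andP[th_ge0 th_le1].
have cos_ge := taylor2_le_cos th_ge0; have cos_le := cos_le_taylor4 th_ge0.
have th4E : th ^+ 4 = th ^+ 2 * th ^+ 2 by rewrite -exprD.
have th2_ge0 : 0 <= th ^+ 2 by apply: sqr_ge0.
have th2_le1 : th ^+ 2 <= 1 by rewrite expr_le1.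
have cos_gt0 : 0 < cos th by lra.
have := ln_le_subr1 cos_gt0; have := ln_ge_1Binv cos_gt0.
have -> : 1 - (cos th)^-1 = (cos th - 1) / cos th by field; lra.
move=> ln_ge ln_le; rewrite ler_norml; apply/andP; split; last by nra.
suff : - th ^+ 4 - th ^+ 2 / 2 <= (cos th - 1) / cos th by lra.
rewrite ler_pdivlMr //; nra.
Qed.

Lemma expR_near (a d : R) : `|d| <= 1 / 2 ->
  `|expR (a + d) - expR a| <= 2 * expR a * `|d|.
Proof.
move=> d_le.
have -> : expR (a + d) - expR a = expR a * (expR d - 1) by rewrite expRD; ring.
rewrite normrM (gtr0_norm (expR_gt0 a)) -mulrA mulrCA ler_pM2l ?expR_gt0 //.
have expd_ge := expR_ge1Dx d.
have expd_le : expR d * (1 - d) <= 1.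
  have := expR_ge1Dx (- d).
  by rewrite expRN -(ler_pM2l (expR_gt0 d)) mulfV ?gt_eqF ?expR_gt0.
move: d_le; rewrite ler_norml => /andP[d_ge d_le].
rewrite ler_norml; apply/andP; split;
  by case: (lerP 0 d) => d0; [rewrite ger0_norm | rewrite ltr0_norm]; nra.
Qed.

Lemma gt1_of_ln_gt0 (y : R) : 0 < ln y -> 1 < y.
Proof. by apply: contraTT; rewrite -!leNgt; apply: ln_le0. Qed.

Lemma exists_ln_natr_gt (y : R) : exists m : nat, forall n, (m <= n)%N -> y < ln n%:R.
Proof.
exists (Num.trunc (expR y)).+1 => n m_le_n.
have expy_lt : expR y < n%:R by apply: lt_le_trans (truncnS_gt _) _; rewrite ler_nat.
by rewrite -ltr_expR lnK // posrE (lt_trans (expR_gt0 y)).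
Qed.

Lemma sqrt_sqrt_exp4 (y : R) : 0 <= y -> Num.sqrt (Num.sqrt y) ^+ 4 = y.
Proof. by move=> y_ge0; rewrite (_ : 4 = 2 * 2)%N // exprM !sqr_sqrtr ?sqrtr_ge0. Qed.

Lemma exists_root4_ln_gt (Q : R) : 0 <= Q -> exists m : nat, forall n, (m <= n)%N ->
  exists2 q : R, Q < q & ln (n%:R : R) = q ^+ 4 / 2.
Proof.
move=> Q_ge0; have [m ln_gt] := exists_ln_natr_gt (Q ^+ 4 / 2).
exists m => n /ln_gt ln_n_gt.
have ln_n_ge0 : 0 <= ln (n%:R : R).
  by apply: le_trans (ltW ln_n_gt); rewrite divr_ge0 ?exprn_ge0.
exists (Num.sqrt (Num.sqrt (2 * ln (n%:R : R)))).
  by rewrite -(@ltr_pXn2r _ 4) ?nnegrE ?sqrtr_ge0 // sqrt_sqrt_exp4 ?mulr_ge0 //; lra.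
by rewrite sqrt_sqrt_exp4 ?mulr_ge0 //; field.
Qed.

Lemma expR_continuous_at (a e : R) : 0 < e ->
  exists2 d : R, 0 < d & forall y, `|y - a| < d -> `|expR y - expR a| < e.
Proof.
move=> e_gt0; have expa_gt0 := expR_gt0 a.
exists (e / (2 * expR a + 2 * e)); first by rewrite divr_gt0 //; lra.
move=> y; set d := e / _ => y_near.
have d_le : d <= 1 / 2 by rewrite ler_pdivrMr; lra.
have := expR_near a (ltW (lt_le_trans y_near d_le)); rewrite [a + _]addrC subrK.
move/le_lt_trans; apply; apply: le_lt_trans (_ : _ <= 2 * expR a * d) _.
  by rewrite ler_pM2l ?mulr_gt0 // ltW.
by rewrite mulrA ltr_pdivrMr; nra.
Qed.
End Elementary.

Section Scaling.
Local Open Scope ring_scope.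
Variable R : realType.
Variables (n : nat) (x q : R).

Let s := q ^+ 2.
Let t := x + 3 / 2 * ln q.
Let u := s + t / s.
Let th := u / n%:R.

Let n_gt0 : 0 < q -> ln (n%:R : R) = q ^+ 4 / 2 -> 0 < (n%:R : R).
Proof.
move=> q_gt0 ln_n.
by apply/(lt_trans ltr01)/gt1_of_ln_gt0; rewrite ln_n divr_gt0 ?exprn_gt0.
Qed.

Let two_ln_n : ln (n%:R : R) = q ^+ 4 / 2 -> 2 * ln (n%:R : R) = s ^+ 2.
Proof. by move=> ln_n; rewrite ln_n /s -exprM; field. Qed.

Lemma Fn_quarter : 0 < q -> ln (n%:R : R) = q ^+ 4 / 2 -> Fn n x / 2 / 2 = th.
Proof.
move=> q_gt0 ln_n; have s_gt0 : 0 < s by rewrite exprn_gt0.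
have sqrt_32ln : Num.sqrt (32 * ln (n%:R : R)) = 4 * s.
  have -> : 32 * ln (n%:R : R) = (4 * s) ^+ 2 by rewrite exprMn -two_ln_n //; ring.
  by rewrite sqrtr_sqr gtr0_norm ?mulr_gt0.
have ln_2ln : ln (2 * ln (n%:R : R)) = 4 * ln q.
  by rewrite two_ln_n // /s -exprM lnXn // mulr_natl.
rewrite /Fn ln_2ln two_ln_n // sqrtr_sqr (gtr0_norm s_gt0) sqrt_32ln /th /u /t.
by field; rewrite !gt_eqF ?n_gt0.
Qed.

Lemma n_ge_s4 : 0 < q -> ln (n%:R : R) = q ^+ 4 / 2 -> s ^+ 4 / 8 <= n%:R.
Proof.
move=> q_gt0 ln_n.
have ln_n_ge0 : 0 <= ln (n%:R : R) by rewrite ln_n divr_ge0 ?exprn_ge0 ?ltW.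
have := expR_ge1Dxn 1 ln_n_ge0; rewrite lnK ?posrE ?n_gt0 //.
have -> : ln (n%:R : R) ^+ 2 / (2`!)%:R = s ^+ 4 / 8.
  by rewrite ln_n /s -!exprM [(2 * 4)%N]mulnC exprM (_ : (2`!)%:R = 2 :> R) //; field.
by apply: le_trans; rewrite lerDr.
Qed.

Let s_ge : 4 <= q -> 4 * q <= s.
Proof. by move=> q_ge4; rewrite /s expr2 ler_pM2r //; lra. Qed.

Let qinv_range : 4 <= q -> 0 < q^-1 <= 4^-1.
Proof. by move=> q_ge4; rewrite invr_gt0 lef_pV2 ?posrE //=; lra. Qed.

Let n_mul_th : 0 < q -> ln (n%:R : R) = q ^+ 4 / 2 -> n%:R * th = u.
Proof. by move=> q_gt0 ln_n; rewrite /th mulrC divfK // gt_eqF ?n_gt0. Qed.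

Lemma norm_t_le : 4 <= q -> `|x| <= q -> `|t| <= 5 / 2 * q.
Proof.
move=> q_ge4 x_le; have ln_q_ge0 : 0 <= ln q by apply: ln_ge0; lra.
have := ln_le_subr1 (_ : 0 < q); move: x_le; rewrite !ler_norml /t; lra.
Qed.

Lemma u_near_s : 4 <= q -> `|x| <= q -> `|u - s| <= 1.
Proof.
move=> q_ge4 x_le; have s_gt0 : 0 < s by have := s_ge q_ge4; lra.
have -> : u - s = t / s by rewrite /u; ring.
rewrite normrM normfV (gtr0_norm s_gt0) ler_pdivrMr // mul1r.
by have := norm_t_le q_ge4 x_le; have := s_ge q_ge4; lra.
Qed.

Let u_range : 4 <= q -> `|x| <= q -> s - 1 <= u <= s + 1.
Proof. by move=> q_ge4 x_le; have := u_near_s q_ge4 x_le; rewrite ler_norml; lra. Qed.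

Lemma u_mul_th_le : 4 <= q -> `|x| <= q -> ln (n%:R : R) = q ^+ 4 / 2 ->
  u * th <= q^-1 / 4.
Proof.
move=> q_ge4 x_le ln_n; have q_gt0 : 0 < q by lra.
have s_ge4q := s_ge q_ge4; have /andP[u_ge u_le] := u_range q_ge4 x_le.
rewrite /th mulrA ler_pdivrMr ?n_gt0 //.
have inv_ge0 : 0 <= q^-1 / 4 by rewrite divr_ge0 ?invr_ge0 //; lra.
apply: le_trans (ler_wpM2l inv_ge0 (n_ge_s4 q_gt0 ln_n)).
have -> : q^-1 / 4 * (s ^+ 4 / 8) = s ^+ 2 * (s ^+ 2 / (32 * q)) by field; lra.
have : 2 <= s ^+ 2 / (32 * q) by rewrite ler_pdivlMr; nra.
rewrite !expr2; nra.
Qed.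

Lemma th_bounds : 4 <= q -> `|x| <= q -> ln (n%:R : R) = q ^+ 4 / 2 ->
  0 < th <= q^-1 / 4.
Proof.
move=> q_ge4 x_le ln_n; have q_gt0 : 0 < q by lra.
have s_ge4q := s_ge q_ge4; have /andP[u_ge _] := u_range q_ge4 x_le.
have th_gt0 : 0 < th by rewrite /th divr_gt0 ?n_gt0 //; lra.
rewrite th_gt0 /=; apply: le_trans (u_mul_th_le q_ge4 x_le ln_n).
by rewrite ler_peMl ?ltW //; lra.
Qed.

Lemma ln_cos_error_le : 4 <= q -> `|x| <= q -> ln (n%:R : R) = q ^+ 4 / 2 ->
  `|n%:R ^+ 2 * ln (cos th) + u ^+ 2 / 2| <= q^-1.
Proof.
move=> q_ge4 x_le ln_n; have q_gt0 : 0 < q by lra.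
have s_ge4q := s_ge q_ge4; have /andP[u_ge _] := u_range q_ge4 x_le.
have /andP[qinv_gt0 qinv_le] := qinv_range q_ge4.
have /andP[th_gt0 th_le] := th_bounds q_ge4 x_le ln_n.
have uth_le := u_mul_th_le q_ge4 x_le ln_n.
have uth_ge0 : 0 <= u * th by rewrite mulr_ge0 ?ltW //; lra.
rewrite -(n_mul_th q_gt0 ln_n).
have -> : n%:R ^+ 2 * ln (cos th) + (n%:R * th) ^+ 2 / 2 =
  n%:R ^+ 2 * (ln (cos th) + th ^+ 2 / 2) by ring.
rewrite normrM ger0_norm ?sqr_ge0 //.
have th_le1 : 0 <= th <= 1 by rewrite ltW //=; lra.
apply: le_trans (ler_wpM2l (sqr_ge0 _) (ln_cos_taylor th_le1)) _.
have -> : n%:R ^+ 2 * th ^+ 4 = (u * th) ^+ 2 by rewrite -(n_mul_th q_gt0 ln_n); ring.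
rewrite expr2; nra.
Qed.

Lemma t_sqr_error_le : 4 <= q -> `|x| <= q -> `|t ^+ 2 / (2 * s ^+ 2)| <= q^-1.
Proof.
move=> q_ge4 x_le; have q_gt0 : 0 < q by lra.
have s2_gt0 : 0 < 2 * s ^+ 2 by rewrite mulr_gt0 ?exprn_gt0.
rewrite ger0_norm ?divr_ge0 ?sqr_ge0 ?(ltW s2_gt0) // ler_pdivrMr //.
have -> : q^-1 * (2 * s ^+ 2) = 2 * q * (q * q) by rewrite /s; field; lra.
have := norm_t_le q_ge4 x_le; rewrite -real_normK ?num_real // expr2.
by have := normr_ge0 t; nra.
Qed.

Lemma n_sin_near_s : 4 <= q -> `|x| <= q -> ln (n%:R : R) = q ^+ 4 / 2 ->
  `|n%:R * sin th - s| <= 2.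
Proof.
move=> q_ge4 x_le ln_n; have q_gt0 : 0 < q by lra.
have s_ge4q := s_ge q_ge4; have /andP[u_ge u_le] := u_range q_ge4 x_le.
have /andP[qinv_gt0 qinv_le] := qinv_range q_ge4.
have /andP[th_gt0 th_le] := th_bounds q_ge4 x_le ln_n.
have uth_le := u_mul_th_le q_ge4 x_le ln_n.
have uth_ge0 : 0 <= u * th by rewrite mulr_ge0 ?ltW //; lra.
have w_le : n%:R * sin th <= u.
  by rewrite -(n_mul_th q_gt0 ln_n) ler_pM2l ?n_gt0 // sin_le_id // ltW.
have w_ge : u - 1 <= n%:R * sin th.
  have := ler_wpM2l (ltW (n_gt0 q_gt0 ln_n)) (taylor3_le_sin (ltW th_gt0)).
  have -> : n%:R * (th - th ^+ 3 / 6) = u - (u * th) * th / 6.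
    by rewrite -(n_mul_th q_gt0 ln_n); ring.
  by nra.
by rewrite ler_norml; apply/andP; split; lra.
Qed.

Lemma ln_sin_error_le : 4 <= q -> `|x| <= q -> ln (n%:R : R) = q ^+ 4 / 2 ->
  `|ln (n%:R * sin th / s)| <= q^-1.
Proof.
move=> q_ge4 x_le ln_n; have q_gt0 : 0 < q by lra.
have s_ge4q := s_ge q_ge4; have s_gt0 : 0 < s by lra.
have /andP[qinv_gt0 qinv_le] := qinv_range q_ge4.
have near1 : `|n%:R * sin th / s - 1| <= q^-1 / 2.
  have -> : n%:R * sin th / s - 1 = (n%:R * sin th - s) / s by field; lra.
  rewrite normrM normfV (gtr0_norm s_gt0) ler_pdivrMr //.
  have -> : q^-1 / 2 * s = q / 2 by rewrite /s; field; lra.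
  by have := n_sin_near_s q_ge4 x_le ln_n; lra.
have d_le : q^-1 / 2 <= 1 / 2 by lra.
by apply: le_trans (ln_near1 d_le near1) _; lra.
Qed.

Lemma log_error_decomposition (c0 r : R) : 0 < q -> ln (n%:R : R) = q ^+ 4 / 2 ->
  0 < n%:R * sin th ->
  ln (n%:R * Num.sqrt (2 * ln (n%:R : R)))
    + (n%:R ^+ 2 * ln (cos th) - 4^-1 * ln (n%:R * sin th) + c0 + r) - (c0 - x) =
  (n%:R ^+ 2 * ln (cos th) + u ^+ 2 / 2) - t ^+ 2 / (2 * s ^+ 2)
    - 4^-1 * ln (n%:R * sin th / s) + r.
Proof.
move=> q_gt0 ln_n w_gt0; have s_gt0 : 0 < s by rewrite exprn_gt0.
have ln_s : ln s = 2 * ln q by rewrite /s lnXn // mulr_natl.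
have ln_ns : ln (n%:R * s) = s ^+ 2 / 2 + 2 * ln q.
  by rewrite lnM ?posrE ?n_gt0 // ln_s -two_ln_n //; field.
have ln_w : ln (n%:R * sin th) = ln (n%:R * sin th / s) + 2 * ln q.
  by rewrite [ln (_ / s)]lnM ?posrE ?invr_gt0 // lnV ?posrE // ln_s; ring.
rewrite two_ln_n // sqrtr_sqr (gtr0_norm s_gt0) ln_ns ln_w /u /t.
by field; rewrite gt_eqF.
Qed.

Lemma Fn_half_range : 4 <= q -> `|x| <= q -> ln (n%:R : R) = q ^+ 4 / 2 ->
  q / n%:R < Fn n x / 2 < 1.
Proof.
move=> q_ge4 x_le ln_n; have q_gt0 : 0 < q by lra.
have -> : Fn n x / 2 = 2 * th by rewrite -Fn_quarter //; field.
have /andP[_ th_le] := th_bounds q_ge4 x_le ln_n.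
have /andP[_ qinv_le] := qinv_range q_ge4.
apply/andP; split; last by lra.
have /andP[u_ge _] := u_range q_ge4 x_le; have := s_ge q_ge4.
by rewrite /th mulrA ltr_pM2r ?invr_gt0 ?n_gt0 //; lra.
Qed.

Lemma log_error_le (c0 C r : R) :
  4 <= q -> `|x| <= q -> ln (n%:R : R) = q ^+ 4 / 2 ->
  `|r| <= C / (n%:R * sin (Fn n x / 2 / 2)) ->
  `|ln (n%:R * Num.sqrt (2 * ln (n%:R : R)))
    + (n%:R ^+ 2 * ln (cos (Fn n x / 2 / 2))
       - 4^-1 * ln (n%:R * sin (Fn n x / 2 / 2)) + c0 + r) - (c0 - x)|
  <= (3 + `|C|) / q.
Proof.
move=> q_ge4 x_le ln_n; have q_gt0 : 0 < q by lra.
rewrite Fn_quarter // => r_le.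
have w_ge : q <= n%:R * sin th.
  by have := n_sin_near_s q_ge4 x_le ln_n; have := s_ge q_ge4; rewrite ler_norml; lra.
have r_le' : `|r| <= `|C| / q.
  apply: le_trans r_le _; apply: le_trans (_ : `|C| / (n%:R * sin th) <= _).
    by rewrite ler_pM2r ?invr_gt0 ?real_ler_norm ?num_real //; lra.
  by rewrite ler_wpM2l // lef_pV2 ?posrE //; lra.
rewrite log_error_decomposition //; last by lra.
have cos_err := ln_cos_error_le q_ge4 x_le ln_n.
have t_err := t_sqr_error_le q_ge4 x_le.
have sin_err := ln_sin_error_le q_ge4 x_le ln_n.
set a := n%:R ^+ 2 * _ + _ in cos_err *; set b := t ^+ 2 / _ in t_err *.
set c := ln (_ / s) in sin_err *.
have := ler_normD (a - b - 4^-1 * c) r; have := ler_normB (a - b) (4^-1 * c).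
have := ler_normB a b; rewrite [`|4^-1 * c|]normrM ger0_norm ?invr_ge0 //.
have /andP[qinv_gt0 _] := qinv_range q_ge4.
by rewrite [(3 + _) / q]mulrDl; lra.
Qed.

End Scaling.

Local Open Scope ring_scope.
Local Open Scope complex_scope.

Theorem lemma1 (R : realType) (c0 s0 : R) (hs0 : 0 < s0)
  (DIKZ : forall eps : R, 0 < eps ->
     exists C : R, exists N : nat, forall n : nat, (N <= n)%N ->
     forall a : R, s0 / n%:R < a -> a < pi - eps ->
     exists r : R, `|r| <= C / (n%:R * sin (a / 2)) /\
       Dn n a = (expR (n%:R ^+ 2 * ln (cos (a / 2))
                       - 4^-1 * ln (n%:R * sin (a / 2)) + c0 + r))%:C)
  (x : R) :
  forall e : R, 0 < e -> exists N : nat, forall n : nat, (N <= n)%N ->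
    `| (n%:R * Num.sqrt (2 * ln (n%:R : R)))%:C * Dn n (Fn n x / 2)
       - (expR (c0 - x))%:C | < e%:C.
Proof.
move=> e e_gt0; have [C [N1 DIKZ1]] := DIKZ 1 ltr01.
have [d d_gt0 expR_near_x] := expR_continuous_at (c0 - x) e_gt0.
have Kd_gt0 : 0 < (3 + `|C|) / d by rewrite divr_gt0 //; have := normr_ge0 C; lra.
have Q_ge0 : 0 <= 4 + `|x| + s0 + (3 + `|C|) / d by have := normr_ge0 x; lra.
have [m large_n] := exists_root4_ln_gt Q_ge0.
exists (maxn N1 m) => n; rewrite geq_max => /andP[n_ge_N1 /large_n[q Q_lt_q ln_n]].
have [q_ge4 x_le s0_lt_q Kd_lt_q] :
    [/\ 4 <= q, `|x| <= q, s0 < q & (3 + `|C|) / d < q].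
  by have := normr_ge0 x; split; lra.
have /andP[a_gt a_lt] := Fn_half_range q_ge4 x_le ln_n.
have s0_lt : s0 / n%:R < Fn n x / 2.
  by apply: le_lt_trans a_gt; rewrite ler_wpM2r ?invr_ge0 // ltW.
have pi_ge : 1 <= pi - 1 :> R by have := pi_ge2 R; lra.
have [r [r_le ->]] := DIKZ1 n n_ge_N1 (Fn n x / 2) s0_lt (lt_le_trans a_lt pi_ge).
have err := log_error_le c0 q_ge4 x_le ln_n r_le.
set P := n%:R * _; set E := _ + c0 + r.
have P_gt0 : 0 < P.
  have ln_n_gt0 : 0 < ln (n%:R : R) by rewrite ln_n divr_gt0 ?exprn_gt0 //; lra.
  have n_gt1 := gt1_of_ln_gt0 ln_n_gt0.
  by rewrite /P mulr_gt0 ?sqrtr_gt0 ?mulr_gt0 //; lra.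
rewrite -rmorphM -rmorphB normc_def /= expr0n /= addr0 sqrtr_sqr ltcR.
rewrite -[P]lnK ?posrE // -expRD; apply: expR_near_x.
apply: le_lt_trans err _; rewrite ltr_pdivrMr; last by lra.
by rewrite mulrC -ltr_pdivrMr.
Qed.
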